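(* Let $\mathbf{b}=(b_n)_{n\in\mathbb{N}_0}$ be a $D$-sequence. Then $\frac{b_{n+1}}{b_n}\to\infty$ if and only if $b_j\to 0$ in $(\mathbb{Z},\tau_{\mathbf{b}})$.
   Context: $\mathbb{T}=\mathbb{R}/\mathbb{Z}$; $\mathbb{T}_m=[-\frac{1}{4m},\frac{1}{4m}]+\mathbb{Z}$. A $D$-sequence is a sequence $\mathbf{b}=(b_n)_{n\in\mathbb{N}_0}$ of natural numbers with $b_0=1$, $b_n\mid b_{n+1}$, $b_n\neq b_{n+1}$. $\tau_{\mathbf{b}}$ is the group topology on $\mathbb{Z}$ with neighborhood basis at $0$ given by $V_{\mathbf{b},m}=\{k\in\mathbb{Z}: \frac{k}{b_n}+\mathbb{Z}\in\mathbb{T}_m \text{ for all } n\in\mathbb{N}\}$, $m\in\mathbb{N}$. *)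

(* rationals model R/Z membership in T_m exactly. *)
From HB Require Import structures.
From mathcomp Require Import all_boot all_order all_algebra.
Set Implicit Arguments. Unset Strict Implicit. Unset Printing Implicit Defensive.
Import Order.TTheory GRing.Theory Num.Theory.
Local Open Scope ring_scope.

Definition D_sequence (b : nat -> nat) : Prop :=
  b 0%N = 1%N /\ (forall n, 0 < b n)%N /\
  (forall n, (b n %| b n.+1)%N) /\ (forall n, b n <> b n.+1).

(* x + Z lies in T_m = [-1/(4m), 1/(4m)] + Z *)
Definition in_Tm (m : nat) (x : rat) : Prop :=
  exists z : int, `|x - z%:~R| <= (4 * m)%:R^-1.

Definition V_b (b : nat -> nat) (m : nat) (k : int) : Prop :=
  forall n : nat, in_Tm m (k%:~R / (b n)%:R).

(* x_j -> 0 in (Z, tau_b): every basic neighbourhood V_{b,m} (m >= 1) of 0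
   eventually contains x_j. *)
Definition tau_b_converges_to_0 (b : nat -> nat) (x : nat -> int) : Prop :=
  forall m : nat, (0 < m)%N ->
    exists N : nat, forall j : nat, (N <= j)%N -> V_b b m (x j).

Definition ratio_to_infty (b : nat -> nat) : Prop :=
  forall M : nat, exists N : nat, forall n : nat, (N <= n)%N ->
    (M%:R <= (b n.+1)%:R / (b n)%:R :> rat).

(* Everything reduces to a single equivalence about one term of the sequence:
   for m >= 1,   b_j \in V_{b,m}   <->   4m * b_j <= b_{j+1}.
   - The coordinates n <= j are harmless: b_n divides b_j, so b_j / b_n is an
     integer and lies in T_m for every m.
   - The coordinates n > j are controlled by n = j+1: since b_{j+1} >= 2 b_j,
     0 <= b_j / b_n <= b_j / b_{j+1} <= 1/2, and a number x in [0, 1/2] is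
     at distance exactly x from Z, so x + Z \in T_m  iff  x <= 1/(4m).
   The theorem then follows by unfolding both sides: "ratio >= 4m eventually"
   is "b_j \in V_{b,m} eventually", and conversely V_{b,M+1} gives ratio >= M. *)
From HB Require Import structures.
From mathcomp Require Import all_boot all_order all_algebra.
From mathcomp Require Import zify lra.
Import Order.TTheory GRing.Theory Num.Theory.

Local Open Scope ring_scope.

Lemma dist_to_int_ge {R : realFieldType} {x : R} (z : int) :
  0 <= x -> x <= 2^-1 -> x <= `|x - z%:~R|.
Proof.
move=> x_ge0 x_le_half; rewrite ler_normr; apply/orP.
have half : (2^-1 : R) = 1 / 2 by rewrite div1r.
rewrite half in x_le_half.
have [z_le0 | z_gt0] := lerP z 0.
- left; have : z%:~R <= 0 :> R by rewrite lerz0.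
  lra.
- right; have : 1 <= z%:~R :> R by rewrite ler1z.
  lra.
Qed.

Lemma in_Tm_int (m : nat) (z : int) : in_Tm m z%:~R.
Proof. by exists z; rewrite subrr normr0 invr_ge0 ler0n. Qed.

Lemma in_Tm_small (m : nat) {x : rat} : 0 <= x -> x <= 2^-1 ->
  in_Tm m x <-> x <= (4 * m)%:R^-1.
Proof.
move=> x_ge0 x_le_half; split.
- by move=> [z /(le_trans (dist_to_int_ge z x_ge0 x_le_half))].
- by move=> x_le; exists 0; rewrite subr0 ger0_norm.
Qed.

Lemma nat_le_ratio (M a c : nat) : (0 < a)%N ->
  (M%:R <= c%:R / a%:R :> rat) = (M * a <= c)%N.
Proof. by move=> a_gt0; rewrite ler_pdivlMr ?ltr0n // -natrM ler_nat. Qed.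

Lemma ratio_le_inv (k a c : nat) : (0 < c)%N -> (0 < k)%N ->
  (a%:R / c%:R <= k%:R^-1 :> rat) = (k * a <= c)%N.
Proof.
move=> c_gt0 k_gt0; rewrite ler_pdivrMr ?ltr0n // ler_pdivlMl ?ltr0n //.
by rewrite -natrM ler_nat.
Qed.

Section DSequence.

Context {b : nat -> nat}.
Hypothesis Db : D_sequence b.

Lemma D_sequence_gt0 (n : nat) : (0 < b n)%N.
Proof. by case: Db => _ [b_gt0 _]. Qed.

Lemma D_sequence_dvd {i j : nat} : (i <= j)%N -> (b i %| b j)%N.
Proof.
case: Db => _ [_ [b_dvd _]].
elim: j => [|j IHj]; first by rewrite leqn0 => /eqP ->.
rewrite leq_eqVlt => /orP [/eqP -> // | /IHj b_i_dvd].
exact: dvdn_trans b_i_dvd (b_dvd j).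
Qed.

(* Each step at least doubles: b_{n+1} is a multiple of b_n other than b_n. *)
Lemma D_sequence_double (n : nat) : (2 * b n <= b n.+1)%N.
Proof.
case: Db => _ [b_gt0 [b_dvd b_neq]].
have /dvdnP [k b_next] := b_dvd n.
case: k b_next => [|[|k]] b_next.
- by have := b_gt0 n.+1; rewrite b_next.
- by case: (b_neq n); rewrite b_next mul1n.
- by rewrite b_next leq_mul2r orbT.
Qed.

Lemma coordinate_past_bound {j n : nat} : (j < n)%N ->
  (b j)%:R / (b n)%:R <= (b j)%:R / (b j.+1)%:R :> rat.
Proof.
move=> jn; have /dvdn_leq le_next := D_sequence_dvd jn.
rewrite ler_pM2l ?ltr0n ?D_sequence_gt0 // lef_pV2 ?posrE ?ltr0n ?D_sequence_gt0 //.
by rewrite ler_nat le_next ?D_sequence_gt0.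
Qed.

Lemma coordinate_past_small {j n : nat} : (j < n)%N ->
  0 <= (b j)%:R / (b n)%:R :> rat /\ (b j)%:R / (b n)%:R <= 2^-1 :> rat.
Proof.
move=> jn; split; first by rewrite divr_ge0 ?ler0n.
apply: le_trans (coordinate_past_bound jn) _.
by rewrite ratio_le_inv ?D_sequence_gt0 ?D_sequence_double.
Qed.

Lemma V_b_term (m j : nat) : (0 < m)%N ->
  V_b b m (b j) <-> (4 * m * b j <= b j.+1)%N.
Proof.
move=> m_gt0; have [small0 small1] := coordinate_past_small (ltnSn j).
split.
- move=> /(_ j.+1) /(in_Tm_small m small0 small1).
  by rewrite ratio_le_inv ?D_sequence_gt0 ?muln_gt0.
- move=> jump n; have [nj | jn] := leqP n j.
  + have /dvdnP [k ->] := D_sequence_dvd nj.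
    rewrite -pmulrn natrM mulfK ?pnatr_eq0 -?lt0n ?D_sequence_gt0 //.
    by rewrite pmulrn; apply: in_Tm_int.
  + have [x_ge0 x_le_half] := coordinate_past_small jn.
    apply/(in_Tm_small m x_ge0 x_le_half).
    apply: le_trans (coordinate_past_bound jn) _.
    by rewrite ratio_le_inv ?D_sequence_gt0 ?muln_gt0.
Qed.

End DSequence.

Theorem corollary3p6 (b : nat -> nat) :
  D_sequence b ->
  (ratio_to_infty b <-> tau_b_converges_to_0 b (fun j => Posz (b j))).
Proof.
move=> Db; split.
- move=> ratio_big m m_gt0; have [N HN] := ratio_big (4 * m)%N.
  exists N => j jN; apply/(V_b_term Db m j m_gt0).
  by rewrite -nat_le_ratio ?(D_sequence_gt0 Db) ?HN.
- move=> conv M; have [N HN] := conv M.+1 isT.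
  exists N => n nN; rewrite nat_le_ratio ?(D_sequence_gt0 Db) //.
  have := (V_b_term Db M.+1 n (ltn0Sn M)).1 (HN n nN).
  by apply: leq_trans; rewrite leq_mul2r; apply/orP; right; lia.
Qed.
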